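(* Let $q(x)\in\mathbb{Z}[x]$ be a monic polynomial of degree $g$ whose coefficient of $x^{g-1}$ is nonzero, and let $\mathrm{sym}(q)(x)=x^{g}\,q\!\left(x+\frac1x\right)$. Then $\mathrm{sym}(q)(x)$ is not a polynomial in $x^k$ for any integer $k>1$. *)

From mathcomp Require Import all_boot all_order all_algebra.
Set Implicit Arguments. Unset Strict Implicit. Unset Printing Implicit Defensive.
Import GRing.Theory.
Local Open Scope ring_scope.

(* sym(q)(x) = x^g q(x + 1/x), with g = deg q.  Writing q = sum_i q_i x^i,
   x^g q(x + 1/x) = sum_{i<=g} q_i (x^2+1)^i x^(g-i), a polynomial in x. *)
Definition sym (q : {poly int}) : {poly int} :=
  \sum_(i < size q) q`_i *: (('X ^+ 2 + 1) ^+ i * 'X ^+ ((size q).-1 - i)).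

Definition is_poly_in_Xk (k : nat) (p : {poly int}) : Prop :=
  exists r : {poly int}, p = r \Po 'X ^+ k.

(* The two top coefficients of sym q are those of x^(2g) and x^(2g-1), namely
   1 and the nonzero q_(g-1): the term q_i (x^2+1)^i x^(g-i) has degree g+i, and
   (x^2+1)^g, being even, does not reach x^(2g-1).  A polynomial in x^k only has
   nonzero coefficients at multiples of k, so k divides both 2g and 2g-1. *)
From mathcomp Require Import all_boot all_order all_algebra.
From mathcomp Require Import zify.
Import GRing.Theory.
Local Open Scope ring_scope.

Lemma dvdn_coef_comp_poly_Xn {R : nzSemiRingType} (r : {poly R}) {k n : nat} :
  (0 < k)%N -> (r \Po 'X^k)`_n != 0 -> (k %| n)%N.
Proof. by move=> k_gt0; rewrite coef_comp_poly_Xn //; case: (k %| n)%N; rewrite ?eqxx. Qed.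

Lemma dvdn_consecutive {k n : nat} : (k %| n)%N -> (k %| n.+1)%N -> k = 1%N.
Proof. by move=> kn; rewrite -addn1 (dvdn_addr _ kn) dvdn1 => /eqP. Qed.

Section SquarePlusOne.

Variable R : comNzRingType.

Lemma X2_add1_monic : ('X^2 + 1 : {poly R}) \is monic.
Proof. exact: (monicXnaddC 1). Qed.

Lemma X2_add1_exp_monic (i : nat) : ('X^2 + 1 : {poly R}) ^+ i \is monic.
Proof. exact/monic_exp/X2_add1_monic. Qed.

Lemma size_X2_add1_exp (i : nat) : size (('X^2 + 1 : {poly R}) ^+ i) = (i.*2).+1.
Proof.
elim: i => [|i IHi]; first by rewrite expr0 size_poly1.
have X2_add1_size : size ('X^2 + 1 : {poly R}) = 3%N by exact: (size_XnaddC 1).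
rewrite exprSr size_Mmonic ?monic_neq0 ?X2_add1_exp_monic ?X2_add1_monic //.
by rewrite IHi X2_add1_size addn3 doubleS.
Qed.

Lemma coef_X2_add1_exp_top (i : nat) : (('X^2 + 1 : {poly R}) ^+ i)`_(i.*2) = 1.
Proof.
by have /monicP := X2_add1_exp_monic i; rewrite lead_coefE size_X2_add1_exp.
Qed.

Lemma coef_X2_add1_exp_gt (i n : nat) :
  (i.*2 < n)%N -> (('X^2 + 1 : {poly R}) ^+ i)`_n = 0.
Proof. by move=> lt_n; rewrite nth_default // size_X2_add1_exp. Qed.

Lemma coef_X2_add1_exp_odd (i n : nat) :
  odd n -> (('X^2 + 1 : {poly R}) ^+ i)`_n = 0.
Proof.
have -> : ('X^2 + 1 : {poly R}) ^+ i = ('X + 1) ^+ i \Po 'X^2.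
  by rewrite rmorphXn /= comp_polyD comp_polyX comp_polyC.
by move=> odd_n; rewrite coef_comp_poly_Xn // dvdn2 odd_n.
Qed.

End SquarePlusOne.

Lemma coef_sym {q : {poly int}} {d : nat} : size q = d.+1 -> forall n : nat,
  (d <= n)%N -> (sym q)`_n = \sum_(i < d.+1) q`_i * (('X^2 + 1) ^+ i)`_(n + i - d).
Proof.
move=> sq n le_dn; rewrite coef_sum sq; apply: eq_bigr => i _.
rewrite coefZ coefMXn ifN; first by congr (_ * _`_ _); have := ltn_ord i; lia.
by rewrite -leqNgt; apply: leq_trans (leq_subr _ _) le_dn.
Qed.

Lemma coef_sym_lead {q : {poly int}} {d : nat} :
  size q = d.+1 -> (sym q)`_(d.*2) = q`_d.
Proof.
move=> sq; rewrite (coef_sym sq) ?big_ord_recr /= ?addnK; last by rewrite -addnn leq_addr.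
rewrite big1 => [|i _]; last first.
  by rewrite coef_X2_add1_exp_gt ?mulr0 //; have := ltn_ord i; lia.
by rewrite add0r coef_X2_add1_exp_top mulr1.
Qed.

Lemma coef_sym_sublead {q : {poly int}} {d : nat} :
  size q = d.+2 -> (sym q)`_(d.*2.+1) = q`_d.
Proof.
move=> sq; rewrite (coef_sym sq); last by rewrite ltnS -addnn leq_addr.
rewrite !big_ord_recr /= addnK (coef_X2_add1_exp_odd _ d.+1) ?oddS ?odd_double //.
rewrite mulr0 addr0 addSn subSS addnK coef_X2_add1_exp_top mulr1.
rewrite big1 => [|i _]; last first.
  by rewrite coef_X2_add1_exp_gt ?mulr0 //; have := ltn_ord i; lia.
by rewrite add0r.
Qed.

Theorem lemma3p3 (q : {poly int}) (g : nat) : (0 < g)%N ->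
  q \is monic -> size q = g.+1 -> q`_g.-1 != 0 ->
  forall k : nat, (1 < k)%N -> ~ is_poly_in_Xk k (sym q).
Proof.
case: g => [//|d] _ /monicP + sq qd k k_gt1 [r sym_q].
rewrite lead_coefE sq => q_lead.
have k_gt0 : (0 < k)%N by apply: ltnW.
have k_sublead : (k %| d.*2.+1)%N.
  by apply: (dvdn_coef_comp_poly_Xn r k_gt0); rewrite -sym_q (coef_sym_sublead sq).
have k_lead : (k %| d.*2.+2)%N.
  apply: (dvdn_coef_comp_poly_Xn r k_gt0).
  by rewrite -sym_q -doubleS (coef_sym_lead sq) q_lead oner_neq0.
by move: k_gt1; rewrite (dvdn_consecutive k_sublead k_lead).
Qed.
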